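(* Let $\mathcal{I}$ be the input simplicial model, let $\langle\mathcal{I},\mathcal{P},\Psi\rangle$ be a simplicial protocol, and let $\mathbf{P}=\kappa(\langle\mathcal{I},\mathcal{P},\Psi\rangle)$. Then the action model $\mathbf{P}$ and the partial product update model $\mathcal{I}[\![\mathbf{P}]\!]$ have isomorphic partial epistemic frames, i.e. there is a bijection between the actions of $\mathbf{P}$ and the worlds of $\mathcal{I}[\![\mathbf{P}]\!]$ which, for every agent $a$, preserves and reflects the relation $\sim_a$.
   Context: Agents $\mathsf{Ag}=\{0,\dots,n-1\}$, $n>1$; $\mathsf{Value}=\mathsf{Ag}$; atoms $\mathsf{At}_a=\{\mathrm{input}_a^v\mid v\in\mathsf{Value}\}$. A chromatic simplicial complex $\langle V,S,\chi\rangle$ here has a finite vertex set $V\subseteq\mathsf{Ag}\times\mathsf{Value}$, coloring $\chi((a,v))=a$, and a set $S$ of nonempty subsets of $V$ closed under nonempty subsets in which distinct vertices of a simplex have distinct colors; facets are maximal simplices, $\mathcal{F}(\mathcal{C})$ is the set of facets, and $\chi(X)=\{\chi(v)\mid v\in X\}$. The input simplicial model $\mathcal{I}$ has vertices $\mathsf{Ag}\times\mathsf{Value}$ and simplices all nonempty subsets of sets $\{(0,v_0),\dots,(n-1,v_{n-1})\}$; its facets are these full sets, labeled $\ell^{\mathcal{I}}(X)=\{\mathrm{input}_a^v\mid(a,v)\in X\}$; as a partial epistemic model its worlds are its facets with $X\sim_aY$ iff $a\in\chi(X\cap Y)$ and labels $\ell^{\mathcal{I}}$. A facet map $\Theta:\mathcal{F}(\mathcal{C})\to\mathcal{P}(\mathcal{F}(\mathcal{D}))$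 satisfies $\bigcup_{Y\in\Theta(X)}\chi(Y)\subseteq\chi(X)$ for all $X$, and $\mathcal{F}(\mathcal{D})=\bigcup_X\Theta(X)$. A simplicial protocol $\langle\mathcal{I},\mathcal{P},\Psi\rangle$ consists of a complex $\mathcal{P}$ and a facet map $\Psi:\mathcal{F}(\mathcal{I})\to\mathcal{P}(\mathcal{F}(\mathcal{P}))$ such that $\chi(Y\cap Y')\subseteq\chi(X\cap X')$ whenever $Y\in\Psi(X)$, $Y'\in\Psi(X')$. The translation $\kappa(\langle\mathcal{I},\mathcal{D},\Theta\rangle)$ is the action model with actions $\mathcal{F}(\mathcal{D})$, $Y\sim_aY'$ iff $a\in\chi(Y\cap Y')$, and $\mathsf{pre}(Y)=\bigvee\{\bigwedge\ell^{\mathcal{I}}(X)\mid X\in\mathcal{F}(\mathcal{I}),Y\in\Theta(X)\}$. An action model is a partial epistemic frame (set with partial equivalence relations $\sim_a$) plus precondition formulas (epistemic logic with $K_a$); $\mathrm{Alive}(t)=\{a\mid t\sim_at\}$, $w\sim_Aw'$ means $w\sim_aw'$ for all $a\in A$. Partial product update $\mathcal{I}[\![\mathbf{A}]\!]$: with $\langle X\rangle_t=\{Y\mid X\sim^{\mathcal{I}}_{\mathrm{Alive}(t)}Y,\ \mathcal{I},Y\models\mathsf{pre}(t)\}$, worlds are $(\langle X\rangle_t,t)$ with $\mathrm{Alive}(t)\subseteq\mathrm{Alive}(X)$ and $\mathcal{I},X\models\mathsf{pre}(t)$; $(\langle X\rangle_t,t)\sim_a(\langle Y\rangle_s,s)$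 iff $X\sim^{\mathcal{I}}_aY$ and $t\sim_as$; label $\bigcap_{X'\in\langle X\rangle_t}\ell^{\mathcal{I}}(X')$. *)

From mathcomp Require Import all_boot.
Set Implicit Arguments. Unset Strict Implicit. Unset Printing Implicit Defensive.

Section Defs.
Variable n : nat.

Definition Ag := 'I_n.
Definition Value := 'I_n.
Definition V := (Ag * Value)%type.

Definition colors (X : {set V}) : {set Ag} := [set v.1 | v in X].

Definition is_complex (VS : {set V}) (S : {set {set V}}) : Prop :=
  forall X, X \in S ->
    [/\ X != set0, X \subset VS,
        (forall u w, u \in X -> w \in X -> u.1 = w.1 -> u = w) &
        (forall Y, Y != set0 -> Y \subset X -> Y \in S)].

Definition facets (S : {set {set V}}) : {set {set V}} :=
  [set X in S | [forall Y in S, (X \subset Y) ==> (Y == X)]].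

Definition input_simplices : {set {set V}} :=
  [set X : {set V} | (X != set0) &&
     [exists f : {ffun Ag -> Value}, X \subset [set (a, f a) | a : Ag]]].

Definition input_facets := facets input_simplices.

Definition facet_map (SC SD : {set {set V}}) (Theta : {set V} -> {set {set V}}) : Prop :=
  (forall X, X \in facets SC -> Theta X \subset facets SD) /\
  (forall X Y, X \in facets SC -> Y \in Theta X -> colors Y \subset colors X) /\
  facets SD = \bigcup_(X in facets SC) Theta X.

Definition simplicial_protocol (VP : {set V}) (SP : {set {set V}})
    (Psi : {set V} -> {set {set V}}) : Prop :=
  [/\ is_complex VP SP, facet_map input_simplices SP Psi &
      forall X X' Y Y', X \in input_facets -> X' \in input_facets ->
        Y \in Psi X -> Y' \in Psi X' ->
        colors (Y :&: Y') \subset colors (X :&: X')].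

Inductive form :=
| Atom of Ag & Value
| FFalse
| Neg of form
| And of form & form
| Or of form & form
| K of Ag & form.

Definition BigOr (s : seq form) := foldr Or FFalse s.
Definition BigAnd (s : seq form) := foldr And (Neg FFalse) s.

(* the input model as a partial epistemic model: worlds = facets of I,
   X ~a Y iff a \in chi(X :&: Y), labels l(X) = {input_a^v | (a,v) \in X} *)
Definition relI (a : Ag) (X Y : {set V}) : bool := a \in colors (X :&: Y).
Definition aliveI (X : {set V}) : {set Ag} := [set a | relI a X X].

Fixpoint satI (X : {set V}) (phi : form) : bool :=
  match phi with
  | Atom a v => (a, v) \in X
  | FFalse => false
  | Neg p => ~~ satI X p
  | And p q => satI X p && satI X q
  | Or p q => satI X p || satI X q
  | K a p => [forall Y : {set V}, ((Y \in input_facets) && relI a X Y) ==> satI Y p]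
  end.

Definition label_conj (X : {set V}) : form :=
  BigAnd [seq Atom v.1 v.2 | v <- enum X].

(* the action model kappa(<I,P,Psi>): actions F(P), Y ~a Y' iff a \in chi(Y :&: Y'),
   pre(Y) = \/ { /\ l(X) | X \in F(I), Y \in Psi X } *)
Definition action (SP : {set {set V}}) := {t : {set V} | t \in facets SP}.
Definition relA (a : Ag) (t s : {set V}) : bool := a \in colors (t :&: s).
Definition aliveA (t : {set V}) : {set Ag} := [set a | relA a t t].
Definition pre (Psi : {set V} -> {set {set V}}) (t : {set V}) : form :=
  BigOr [seq label_conj X | X <- enum [set X in input_facets | t \in Psi X]].

Definition bracket (Psi : {set V} -> {set {set V}}) (X t : {set V}) : {set {set V}} :=
  [set Y in input_facets |
     [forall a in aliveA t, relI a X Y] && satI Y (pre Psi t)].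

(* X is a valid representative of the world w = (<X>_t, t) *)
Definition rep (Psi : {set V} -> {set {set V}}) (w : {set {set V}} * {set V})
    (X : {set V}) : Prop :=
  [/\ X \in input_facets, aliveA w.2 \subset aliveI X,
      satI X (pre Psi w.2) & w.1 = bracket Psi X w.2].

Definition is_world (SP : {set {set V}}) (Psi : {set V} -> {set {set V}})
    (w : {set {set V}} * {set V}) : Prop :=
  w.2 \in facets SP /\ exists X, rep Psi w X.

Definition world (SP : {set {set V}}) (Psi : {set V} -> {set {set V}}) :=
  {w : {set {set V}} * {set V} | is_world SP Psi w}.

Definition upd_rel (Psi : {set V} -> {set {set V}}) (a : Ag)
    (w w' : {set {set V}} * {set V}) : Prop :=
  exists X X', [/\ rep Psi w X, rep Psi w' X', relI a X X' & relA a w.2 w'.2].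

End Defs.

(** Because a simplicial protocol never lets two output facets share more
    colours than their input facets do, for an action [t] the bracket
    [<X>_t] does not depend on the representative [X]: it is always the set
    of input facets that [Psi] maps onto [t].  Hence every world of the
    product update is [(Psi^-1 t, t)] for a unique action [t], and two
    worlds are [a]-related exactly when their actions are, using
    representatives [X, X'] with [a \in chi(t :&: t') \subset chi(X :&: X')]. *)

From Stdlib Require Import ProofIrrelevance.
From mathcomp Require Import all_boot.
Set Implicit Arguments. Unset Strict Implicit. Unset Printing Implicit Defensive.

Section InputModel.
Variable n : nat.
Implicit Types (X Y t : {set V n}).

Lemma facets_subset_eq (S : {set {set V n}}) X Y :
  X \in facets S -> Y \in S -> X \subset Y -> X = Y.
Proof. by rewrite inE => /andP [_ /forall_inP /(_ Y)] H /H /implyP H' /H' /eqP. Qed.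

Lemma facets_sub (S : {set {set V n}}) : facets S \subset S.
Proof. by apply/subsetP => X; rewrite inE => /andP []. Qed.

Lemma satI_BigAnd_atoms Y (s : seq (V n)) :
  satI Y (BigAnd [seq Atom v.1 v.2 | v <- s]) = all [in Y] s.
Proof. by elim: s => [|v s IH] //=; rewrite IH -surjective_pairing. Qed.

Lemma satI_BigOr Y (s : seq (form n)) : satI Y (BigOr s) = has (satI Y) s.
Proof. by elim: s => [|p s IH] //=; rewrite IH. Qed.

Lemma satI_label_conj X Y : satI Y (label_conj X) = (X \subset Y).
Proof.
rewrite /label_conj satI_BigAnd_atoms; apply/allP/subsetP => H v.
  by move=> vX; apply: H; rewrite mem_enum.
by rewrite mem_enum; apply: H.
Qed.

Lemma satI_pre Psi Y t : Y \in input_facets n -> satI Y (pre Psi t) = (t \in Psi Y).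
Proof.
move=> YF; rewrite /pre satI_BigOr has_map; apply/hasP/idP => [[X] | tY].
  rewrite mem_enum inE /= satI_label_conj => /andP [XF tX] XY.
  by rewrite -(facets_subset_eq XF _ XY) // (subsetP (facets_sub _) _ YF).
by exists Y; rewrite ?mem_enum inE ?YF //= satI_label_conj.
Qed.

Lemma aliveA_colors t : aliveA t = colors t.
Proof. by apply/setP => a; rewrite inE /relA setIid. Qed.

Lemma aliveI_colors X : aliveI X = colors X.
Proof. by apply/setP => a; rewrite inE /relI setIid. Qed.

End InputModel.

Section ProtocolWorlds.
Variables (n : nat) (VP : {set V n}) (SP : {set {set V n}}).
Variable Psi : {set V n} -> {set {set V n}}.
Hypothesis HP : simplicial_protocol VP SP Psi.
Implicit Types (X Y t : {set V n}).

Definition preimage_facets t := [set X in input_facets n | t \in Psi X].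

Lemma colors_protocolI X X' t t' :
    X \in input_facets n -> X' \in input_facets n -> t \in Psi X -> t' \in Psi X' ->
  colors (t :&: t') \subset colors (X :&: X').
Proof. by case: HP => _ _; apply. Qed.

Lemma action_has_preimage t : t \in facets SP -> exists2 X, X \in input_facets n & t \in Psi X.
Proof. by case: HP => _ [_ [_ ->]] _ /bigcupP [X]; exists X. Qed.

Lemma bracket_preimage X t :
  X \in input_facets n -> t \in Psi X -> bracket Psi X t = preimage_facets t.
Proof.
move=> XF tX; apply/setP => Y; rewrite [LHS]inE [RHS]inE.
have [YF /= | //] := boolP (Y \in input_facets n); rewrite satI_pre //.
have [tY | ] := boolP (t \in Psi Y); rewrite ?andbF ?andbT //.
apply/forall_inP => a; rewrite aliveA_colors => a_t.
by apply: (subsetP (colors_protocolI XF YF tX tY)); rewrite setIid.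
Qed.

Lemma rep_preimage X t :
  X \in input_facets n -> t \in Psi X -> rep Psi (preimage_facets t, t) X.
Proof.
move=> XF tX; case: HP => _ [_ [colors_sub _]] _.
split; rewrite /= ?satI_pre ?bracket_preimage //.
by rewrite aliveA_colors aliveI_colors colors_sub.
Qed.

Lemma rep_preimageP w X : rep Psi w X -> w.1 = preimage_facets w.2 /\ w.2 \in Psi X.
Proof. by case=> XF _; rewrite satI_pre // => tX ->; rewrite bracket_preimage. Qed.

Lemma is_world_preimage (t : action SP) : is_world SP Psi (preimage_facets (val t), val t).
Proof.
split; first exact: valP.
by have [X XF tX] := action_has_preimage (valP t); exists X; apply: rep_preimage.
Qed.

Definition world_of_action (t : action SP) : world SP Psi :=
  exist _ _ (is_world_preimage t).

Definition action_of_world (w : world SP Psi) : action SP :=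
  exist _ (proj1_sig w).2 (proj1 (proj2_sig w)).

Lemma world_of_actionK : cancel world_of_action action_of_world.
Proof. by move=> t; apply: val_inj. Qed.

Lemma action_of_worldK : cancel action_of_world world_of_action.
Proof.
case=> [[b t] wP]; have [_ [X /rep_preimageP [/= Eb _]]] := wP; subst b.
by congr exist; apply: proof_irrelevance.
Qed.

Lemma upd_rel_world_of_action a (t s : action SP) :
  relA a (val t) (val s) <->
  upd_rel Psi a (proj1_sig (world_of_action t)) (proj1_sig (world_of_action s)).
Proof.
split=> [ats | [X [X' [_ _ _ ->]]] //].
have [X XF tX] := action_has_preimage (valP t).
have [X' X'F sX'] := action_has_preimage (valP s).
exists X, X'; split; try exact: rep_preimage; last exact: ats.
exact: (subsetP (colors_protocolI XF X'F tX sX')).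
Qed.

End ProtocolWorlds.

Theorem propositionA3 (n : nat) (Hn : 1 < n) (VP : {set V n})
    (SP : {set {set V n}}) (Psi : {set V n} -> {set {set V n}}) :
  simplicial_protocol VP SP Psi ->
  exists f : action SP -> world SP Psi,
    bijective f /\
    forall (a : Ag n) (t s : action SP),
      relA a (proj1_sig t) (proj1_sig s) <-> upd_rel Psi a (proj1_sig (f t)) (proj1_sig (f s)).
Proof.
move=> HP; exists (world_of_action HP); split; last exact: upd_rel_world_of_action.
by exists (@action_of_world n SP Psi); [exact: world_of_actionK | exact: action_of_worldK].
Qed.
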